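(* Let $c\in\mathbb{R}\setminus\{0\}$ and let $\boldsymbol\eta_c:\mathbb{R}^2\to\mathbb{R}^2$ be $$\boldsymbol\eta_c(u,v)=\bigl(u^2+2cv,\ v^2+2cu\bigr).$$ Let $\mathbf y=(s_1,s_2)$ be a point in the four-image region of $\boldsymbol\eta_c$, i.e. the equation $\boldsymbol\eta_c(\mathbf x)=\mathbf y$ has exactly four distinct solutions $\mathbf x_i=(u_i,v_i)\in\mathbb{R}^2$, $i=1,\dots,4$, each with $\det(\mathrm{Jac}\,\boldsymbol\eta_c)(\mathbf x_i)\neq0$. Then, with $\mu_i=1/\det(\mathrm{Jac}\,\boldsymbol\eta_c)(\mathbf x_i)=\frac{1}{4(u_iv_i-c^2)}$, $$\mu_1+\mu_2+\mu_3+\mu_4=0.$$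
   Context: This map is the universal quantitative form of a one-parameter family of gravitational lensing maps near a hyperbolic umbilic caustic. Its critical curve is $uv=c^2$, and its caustic is $s_1=u^2+2c^3/u$, $s_2=2cu+c^4/u^2$; the four-image region is the region ''inside the beak'' of this caustic, where sources have exactly four preimages. *)

From Stdlib Require Import Reals.
Open Scope R_scope.

Definition eta (c : R) (x : R * R) : R * R :=
  let (u, v) := x in (u ^ 2 + 2 * c * v, v ^ 2 + 2 * c * u).

(* Determinant of the Jacobian matrix of eta_c at (u,v):
   Jac = [[d s1/du, d s1/dv], [d s2/du, d s2/dv]] = [[2u, 2c], [2c, 2v]]. *)
Definition jac_det (c : R) (x : R * R) : R :=
  let (u, v) := x in (2 * u) * (2 * v) - (2 * c) * (2 * c).

Definition mu (c : R) (x : R * R) : R := / jac_det c x.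

Definition four_images (c : R) (y x1 x2 x3 x4 : R * R) : Prop :=
  x1 <> x2 /\ x1 <> x3 /\ x1 <> x4 /\ x2 <> x3 /\ x2 <> x4 /\ x3 <> x4 /\
  eta c x1 = y /\ eta c x2 = y /\ eta c x3 = y /\ eta c x4 = y /\
  (forall x, eta c x = y -> x = x1 \/ x = x2 \/ x = x3 \/ x = x4) /\
  jac_det c x1 <> 0 /\ jac_det c x2 <> 0 /\ jac_det c x3 <> 0 /\ jac_det c x4 <> 0.

(* Eliminating v: if eta_c(u,v) = (s1,s2) with c <> 0, then
   v = (s1 - u^2)/(2c) and u is a root of the monic quartic
     Q(u) = u^4 - 2 s1 u^2 + 8 c^3 u + (s1^2 - 4 c^2 s2),
   while the Jacobian determinant equals -Q'(u)/(2c).  Distinct preimages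
   have distinct abscissae, so the four preimages give the four distinct
   roots u1..u4 of Q.  A monic quartic with four distinct roots is
   (x-u1)(x-u2)(x-u3)(x-u4) (a cubic with four roots vanishes), hence
   Q'(ui) = prod_{j<>i} (ui - uj).  Therefore mu_i = -2c / prod_{j<>i}(ui-uj),
   and the theorem is the partial-fraction identity
   sum_i 1/prod_{j<>i}(ui-uj) = 0 for four distinct reals. *)

From Stdlib Require Import Reals Lra.
Open Scope R_scope.

Definition quartic (a3 a2 a1 a0 x : R) : R :=
  x ^ 4 + a3 * x ^ 3 + a2 * x ^ 2 + a1 * x + a0.

Definition quartic_deriv (a3 a2 a1 x : R) : R :=
  4 * x ^ 3 + 3 * a3 * x ^ 2 + 2 * a2 * x + a1.

Lemma cancel_diff (a b X : R) : a <> b -> (a - b) * X = 0 -> X = 0.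
Proof.
  intros hab e. destruct (Rmult_integral _ _ e) as [e' | e']; [lra | exact e'].
Qed.

(* A polynomial of degree at most 3 vanishing at four distinct points is zero:
   its successive divided differences b3 (u1^2+u1u2+u2^2) + b2 (u1+u2) + b1,
   b3 (u1+u2+u3) + b2 and b3 all vanish. *)
Lemma cubic_four_roots (b3 b2 b1 b0 u1 u2 u3 u4 : R) :
  let p x := b3 * x ^ 3 + b2 * x ^ 2 + b1 * x + b0 in
  u1 <> u2 -> u1 <> u3 -> u1 <> u4 -> u2 <> u3 -> u2 <> u4 -> u3 <> u4 ->
  p u1 = 0 -> p u2 = 0 -> p u3 = 0 -> p u4 = 0 ->
  b3 = 0 /\ b2 = 0 /\ b1 = 0 /\ b0 = 0.
Proof.
  intros p n12 n13 n14 n23 n24 n34 r1 r2 r3 r4.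
  set (d1 x y := b3 * (x ^ 2 + x * y + y ^ 2) + b2 * (x + y) + b1).
  set (d2 x y z := b3 * (x + y + z) + b2).
  assert (first_diff : forall x y, x <> y -> p x = 0 -> p y = 0 -> d1 x y = 0).
  { intros x y nxy px py. apply (cancel_diff x y _ nxy).
    replace ((x - y) * d1 x y) with (p x - p y) by (unfold p, d1; ring). lra. }
  assert (second_diff : forall x y z, y <> z -> d1 x y = 0 -> d1 x z = 0 ->
                                      d2 x y z = 0).
  { intros x y z nyz hy hz. apply (cancel_diff y z _ nyz).
    replace ((y - z) * d2 x y z) with (d1 x y - d1 x z) by (unfold d1, d2; ring).
    lra. }
  assert (h123 := second_diff _ _ _ n23 (first_diff _ _ n12 r1 r2)
                                        (first_diff _ _ n13 r1 r3)).
  assert (h124 := second_diff _ _ _ n24 (first_diff _ _ n12 r1 r2)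
                                        (first_diff _ _ n14 r1 r4)).
  assert (hb3 : b3 = 0).
  { apply (cancel_diff u3 u4 _ n34).
    replace ((u3 - u4) * b3) with (d2 u1 u2 u3 - d2 u1 u2 u4) by (unfold d2; ring).
    lra. }
  subst b3.
  assert (hb2 : b2 = 0) by (unfold d2 in h123; lra).
  subst b2.
  assert (hb1 : b1 = 0)
    by (pose proof (first_diff _ _ n12 r1 r2) as h12; unfold d1 in h12; lra).
  subst b1. unfold p in r1. repeat split; lra.
Qed.

Lemma quartic_vieta (a3 a2 a1 a0 u1 u2 u3 u4 : R) :
  u1 <> u2 -> u1 <> u3 -> u1 <> u4 -> u2 <> u3 -> u2 <> u4 -> u3 <> u4 ->
  quartic a3 a2 a1 a0 u1 = 0 -> quartic a3 a2 a1 a0 u2 = 0 ->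
  quartic a3 a2 a1 a0 u3 = 0 -> quartic a3 a2 a1 a0 u4 = 0 ->
  a3 = - (u1 + u2 + u3 + u4) /\
  a2 = u1 * u2 + u1 * u3 + u1 * u4 + u2 * u3 + u2 * u4 + u3 * u4 /\
  a1 = - (u1 * u2 * u3 + u1 * u2 * u4 + u1 * u3 * u4 + u2 * u3 * u4) /\
  a0 = u1 * u2 * u3 * u4.
Proof.
  intros n12 n13 n14 n23 n24 n34 r1 r2 r3 r4.
  (* quartic minus the product of the root factors is a cubic with four roots *)
  assert (difference : forall x, quartic a3 a2 a1 a0 x
      - (x - u1) * (x - u2) * (x - u3) * (x - u4)
      = (a3 + (u1 + u2 + u3 + u4)) * x ^ 3
      + (a2 - (u1 * u2 + u1 * u3 + u1 * u4 + u2 * u3 + u2 * u4 + u3 * u4)) * x ^ 2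
      + (a1 + (u1 * u2 * u3 + u1 * u2 * u4 + u1 * u3 * u4 + u2 * u3 * u4)) * x
      + (a0 - u1 * u2 * u3 * u4)).
  { intros x. unfold quartic. ring. }
  destruct (cubic_four_roots
              (a3 + (u1 + u2 + u3 + u4))
              (a2 - (u1 * u2 + u1 * u3 + u1 * u4 + u2 * u3 + u2 * u4 + u3 * u4))
              (a1 + (u1 * u2 * u3 + u1 * u2 * u4 + u1 * u3 * u4 + u2 * u3 * u4))
              (a0 - u1 * u2 * u3 * u4) u1 u2 u3 u4)
    as (e3 & e2 & e1 & e0); auto;
    try (cbv beta; rewrite <- difference; unfold quartic in *; lra).
  repeat split; lra.
Qed.

Lemma quartic_deriv_at_root (a3 a2 a1 a0 u1 u2 u3 u4 : R) :
  u1 <> u2 -> u1 <> u3 -> u1 <> u4 -> u2 <> u3 -> u2 <> u4 -> u3 <> u4 ->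
  quartic a3 a2 a1 a0 u1 = 0 -> quartic a3 a2 a1 a0 u2 = 0 ->
  quartic a3 a2 a1 a0 u3 = 0 -> quartic a3 a2 a1 a0 u4 = 0 ->
  quartic_deriv a3 a2 a1 u1 = (u1 - u2) * (u1 - u3) * (u1 - u4).
Proof.
  intros n12 n13 n14 n23 n24 n34 r1 r2 r3 r4.
  destruct (quartic_vieta a3 a2 a1 a0 u1 u2 u3 u4) as (-> & -> & -> & _); auto.
  unfold quartic_deriv. ring.
Qed.

Lemma partial_fractions_four (u1 u2 u3 u4 : R) :
  u1 <> u2 -> u1 <> u3 -> u1 <> u4 -> u2 <> u3 -> u2 <> u4 -> u3 <> u4 ->
  / ((u1 - u2) * (u1 - u3) * (u1 - u4)) + / ((u2 - u1) * (u2 - u3) * (u2 - u4))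
  + / ((u3 - u1) * (u3 - u2) * (u3 - u4)) + / ((u4 - u1) * (u4 - u2) * (u4 - u3))
  = 0.
Proof.
  intros n12 n13 n14 n23 n24 n34.
  field. repeat split; apply Rminus_eq_contra; auto.
Qed.

(* The quartic obtained by eliminating v from eta_c(u,v) = (s1,s2). *)
Definition eta_quartic (c s1 s2 u : R) : R :=
  quartic 0 (-2 * s1) (8 * c ^ 3) (s1 ^ 2 - 4 * c ^ 2 * s2) u.

Definition eta_quartic_deriv (c s1 u : R) : R :=
  quartic_deriv 0 (-2 * s1) (8 * c ^ 3) u.

Lemma eta_preimage (c s1 s2 u v : R) : c <> 0 -> eta c (u, v) = (s1, s2) ->
  v = (s1 - u ^ 2) / (2 * c) /\ eta_quartic c s1 s2 u = 0 /\
  jac_det c (u, v) = - eta_quartic_deriv c s1 u / (2 * c).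
Proof.
  intros hc e. simpl in e. injection e as <- <-.
  unfold eta_quartic, eta_quartic_deriv, quartic, quartic_deriv, jac_det.
  repeat split; [field | ring | field]; auto.
Qed.

(* Distinct preimages have distinct abscissae, as v is a function of u. *)
Lemma preimage_abscissae_distinct (c s1 s2 u v u' v' : R) : c <> 0 ->
  eta c (u, v) = (s1, s2) -> eta c (u', v') = (s1, s2) ->
  (u, v) <> (u', v') -> u <> u'.
Proof.
  intros hc e e' n <-.
  destruct (eta_preimage _ _ _ _ _ hc e) as (hv & _).
  destruct (eta_preimage _ _ _ _ _ hc e') as (hv' & _).
  apply n. congruence.
Qed.

Lemma mu_at_preimage (c s1 s2 u v : R) : c <> 0 -> eta c (u, v) = (s1, s2) ->
  jac_det c (u, v) <> 0 -> mu c (u, v) = - (2 * c) * / eta_quartic_deriv c s1 u.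
Proof.
  intros hc e hj. destruct (eta_preimage _ _ _ _ _ hc e) as (_ & _ & hjac).
  unfold mu. rewrite hjac in *. field. split; auto.
  intros h0. apply hj. rewrite h0. field. auto.
Qed.

Theorem theorem1 (c : R) (hc : c <> 0) (y x1 x2 x3 x4 : R * R)
  (h4 : four_images c y x1 x2 x3 x4) :
  mu c x1 + mu c x2 + mu c x3 + mu c x4 = 0.
Proof.
  destruct y as [s1 s2], x1 as [u1 v1], x2 as [u2 v2],
           x3 as [u3 v3], x4 as [u4 v4].
  destruct h4 as (n12 & n13 & n14 & n23 & n24 & n34 &
                  e1 & e2 & e3 & e4 & _ & j1 & j2 & j3 & j4).
  assert (roots : forall u v, eta c (u, v) = (s1, s2) -> eta_quartic c s1 s2 u = 0)
    by (intros u v e; apply (eta_preimage _ _ _ _ _ hc e)).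
  pose proof (roots _ _ e1) as r1; pose proof (roots _ _ e2) as r2;
  pose proof (roots _ _ e3) as r3; pose proof (roots _ _ e4) as r4.
  assert (m12 := preimage_abscissae_distinct _ _ _ _ _ _ _ hc e1 e2 n12).
  assert (m13 := preimage_abscissae_distinct _ _ _ _ _ _ _ hc e1 e3 n13).
  assert (m14 := preimage_abscissae_distinct _ _ _ _ _ _ _ hc e1 e4 n14).
  assert (m23 := preimage_abscissae_distinct _ _ _ _ _ _ _ hc e2 e3 n23).
  assert (m24 := preimage_abscissae_distinct _ _ _ _ _ _ _ hc e2 e4 n24).
  assert (m34 := preimage_abscissae_distinct _ _ _ _ _ _ _ hc e3 e4 n34).
  unfold eta_quartic in r1, r2, r3, r4.
  rewrite (mu_at_preimage _ _ _ _ _ hc e1 j1), (mu_at_preimage _ _ _ _ _ hc e2 j2),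
          (mu_at_preimage _ _ _ _ _ hc e3 j3), (mu_at_preimage _ _ _ _ _ hc e4 j4).
  unfold eta_quartic_deriv.
  rewrite (quartic_deriv_at_root _ _ _ (s1 ^ 2 - 4 * c ^ 2 * s2) u1 u2 u3 u4),
          (quartic_deriv_at_root _ _ _ (s1 ^ 2 - 4 * c ^ 2 * s2) u2 u1 u3 u4),
          (quartic_deriv_at_root _ _ _ (s1 ^ 2 - 4 * c ^ 2 * s2) u3 u1 u2 u4),
          (quartic_deriv_at_root _ _ _ (s1 ^ 2 - 4 * c ^ 2 * s2) u4 u1 u2 u3); auto.
  rewrite <- !Rmult_plus_distr_l, partial_fractions_four; auto using Rmult_0_r.
Qed.
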